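(* Let $G$ be a group and $A\subseteq G$ a nonempty finite set. (a) For any nonempty finite $B\subseteq G$: $\operatorname{VC}^\ell_B(A)=0$ iff $|BA|=|A|$, and $\operatorname{VC}^r_B(A)=0$ iff $|AB|=|A|$. (b) The following are equivalent: (i) $\operatorname{VC}^\ell_{A^{-1}}(A)=0$; (ii) $\operatorname{VC}^r_{A^{-1}}(A)=0$; (iii) $|AA^{-1}|=|A|$; (iv) $|A^{-1}A|=|A|$; (v) $A$ is a coset of a subgroup of $G$. (c) The following are equivalent: (i) $\operatorname{VC}^\ell_A(A)=0$; (ii) $\operatorname{VC}^r_A(A)=0$; (iii) $|AA|=|A|$; (iv) $A=aH$ for some subgroup $H\leq G$ and $a\in G$ with $aH=Ha$.
   Context: $AB=\{ab\}$, $A^{-1}=\{a^{-1}\}$. A set system $\mathcal F$ on $X$ shatters $Y\subseteq X$ if $\{Y\cap S:S\in\mathcal F\}$ is the power set of $Y$; $\operatorname{VC}(\mathcal F)$ is the maximum size of a finite shattered set (so the empty set is shattered by any nonempty system). $\operatorname{VC}^\ell_B(A)=\operatorname{VC}(\{xA:x\in B\})$, $\operatorname{VC}^r_B(A)=\operatorname{VC}(\{Ax:x\in B\})$. *)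

From HB Require Import structures.
From mathcomp Require Import all_boot.
From mathcomp Require Import finmap.
Set Implicit Arguments. Unset Strict Implicit. Unset Printing Implicit Defensive.
Local Open Scope fset_scope.
Local Open Scope group_scope.

Section Defs.
Variable G : groupType.

Definition lmul (x : G) (A : {fset G}) : {fset G} := [fset x * a | a in A].
Definition rmul (A : {fset G}) (x : G) : {fset G} := [fset a * x | a in A].
Definition setmul (A B : {fset G}) : {fset G} := [fset a * b | a in A, b in B].
Definition setinv (A : {fset G}) : {fset G} := [fset a^-1 | a in A].

(* a set system on G, given as a predicate on finite subsets (all members of
   the systems considered here are finite) *)
Definition shatters (F : {fset G} -> Prop) (Y : {fset G}) : Prop :=
  forall Z : {fset G}, Z `<=` Y -> exists2 S, F S & Y `&` S = Z.

Definition VCdim (F : {fset G} -> Prop) (n : nat) : Prop :=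
  (exists2 Y : {fset G}, shatters F Y & #|` Y| = n) /\
  (forall Y : {fset G}, shatters F Y -> (#|` Y| <= n)%N).

Definition VCl (B A : {fset G}) (n : nat) : Prop :=
  VCdim (fun S => exists2 x, x \in B & S = lmul x A) n.
Definition VCr (B A : {fset G}) (n : nat) : Prop :=
  VCdim (fun S => exists2 x, x \in B & S = rmul A x) n.

Definition is_subgroup (H : G -> Prop) : Prop :=
  H 1 /\ (forall x y, H x -> H y -> H (x * y)) /\ (forall x, H x -> H x^-1).

Definition is_lcoset (A : {fset G}) (a : G) (H : G -> Prop) : Prop :=
  forall x, x \in A <-> exists2 h, H h & x = a * h.

Definition lcoset_eq_rcoset (a : G) (H : G -> Prop) : Prop :=
  forall x, (exists2 h, H h & x = a * h) <-> (exists2 h, H h & x = h * a).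
End Defs.

From HB Require Import structures.
From mathcomp Require Import all_boot.
From mathcomp Require Import finmap.
Set Implicit Arguments. Unset Strict Implicit. Unset Printing Implicit Defensive.
Local Open Scope fset_scope.
Local Open Scope group_scope.

(* Zero VC dimension of a nonempty family means that all its members coincide.
   The translates xA (x in B) have |A| elements each and cover BA, so
   |BA| = |A| exactly when they all coincide, which gives (a).  For B = A^-1,
   coinciding translates a^-1 A say that A is closed under (a, b, c) |-> a b^-1 c,
   and a nonempty set with that closure is the coset a (a^-1 A) of the
   subgroup a^-1 A, for any a in A.  For B = A, coinciding left and right
   translates give the same closure and moreover show that a normalises
   a^-1 A. *)

Section CoveringFamily.
Variables (I K : choiceType) (f : I -> {fset K}).

Lemma fsubset_in_eq (B : {fset I}) :
  {in B &, forall x y, f x `<=` f y} -> {in B &, forall x y, f x = f y}.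
Proof. by move=> sub x y xB yB; apply/eqP; rewrite eqEfsubset !sub. Qed.

Lemma card_cover_eqP (B : {fset I}) (U : {fset K}) (n : nat) :
  B != fset0 ->
  {in B, forall x, f x `<=` U} ->
  (forall z, z \in U -> exists2 x, x \in B & z \in f x) ->
  {in B, forall x, #|` f x| = n} ->
  #|` U| = n <-> {in B &, forall x y, f x = f y}.
Proof.
move=> /fset0Pn[x0 x0B] fU Ucov card_f; split=> [cardU | f_eq].
  have f_U x : x \in B -> f x = U.
    by move=> xB; apply/eqP; rewrite eqEfcard fU //= card_f ?cardU.
  by move=> x y xB yB; rewrite !f_U.
suff -> : U = f x0 by rewrite card_f.
apply/eqP; rewrite eqEfsubset fU // andbT.
by apply/fsubsetP=> z /Ucov[x xB]; rewrite (f_eq x x0).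
Qed.

End CoveringFamily.

Section VCdimZero.
Variable G : groupType.
Implicit Types (F : {fset G} -> Prop) (A B S T : {fset G}).

Lemma VCdim0P F :
  VCdim F 0 <-> (exists S, F S) /\ (forall S T, F S -> F T -> S = T).
Proof.
split=> [[[Y shY _] small] | [[S0 FS0] F_eq]].
  split.
    by have [S FS _] := shY fset0 (fsub0set Y); exists S.
  have F_sub S T : F S -> F T -> S `<=` T.
    move=> FS FT; apply/fsubsetP=> z zS; apply/negPn/negP=> zNT.
    suff /small : shatters F [fset z] by rewrite cardfs1.
    move=> Z; rewrite fsubset1 => /orP[/eqP-> | /eqP->].
      by exists S => //; apply/fsetIidPl; rewrite fsub1set.
    exists T => //; apply/fsetP=> w; rewrite !inE.
    by case: eqP => // ->; apply/negbTE.
  by move=> S T FS FT; apply/eqP; rewrite eqEfsubset !F_sub.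
split=> [|Y shY].
  exists fset0; last exact: cardfs0.
  by move=> Z; rewrite fsubset0 => /eqP->; exists S0; rewrite ?fset0I.
have [-> | [y yY]] := fset_0Vmem Y; first by rewrite cardfs0.
have [S FS YS] := shY Y (fsubset_refl Y).
have [T FT YT] := shY (Y `\ y) (fsubD1set Y y).
have : y \in Y `&` T by rewrite -(F_eq S T) // YS.
by rewrite YT !inE eqxx.
Qed.

Lemma VCdim0_familyP B (f : G -> {fset G}) : B != fset0 ->
  VCdim (fun S => exists2 x, x \in B & S = f x) 0 <->
  {in B &, forall x y, f x = f y}.
Proof.
move=> /fset0Pn[x0 x0B]; rewrite VCdim0P; split=> [[_ f_eq] x y xB yB | f_eq].
  by apply: f_eq; [exists x | exists y].
by split=> [|_ _ [x xB ->] [y yB ->]]; [exists (f x0), x0 | apply: f_eq].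
Qed.

Lemma VCl0P B A : B != fset0 ->
  VCl B A 0 <-> {in B &, forall x y, lmul x A = lmul y A}.
Proof. exact: VCdim0_familyP. Qed.

Lemma VCr0P B A : B != fset0 ->
  VCr B A 0 <-> {in B &, forall x y, rmul A x = rmul A y}.
Proof. exact: VCdim0_familyP. Qed.

End VCdimZero.

Section Translates.
Variable G : groupType.
Implicit Types (A B : {fset G}) (x y z : G).

Lemma mem_lmul x A z : (z \in lmul x A) = (x^-1 * z \in A).
Proof.
apply/imfsetP/idP => [[a aA ->] | zA]; first by rewrite mulKg.
by exists (x^-1 * z); rewrite ?mulVKg.
Qed.

Lemma mem_rmul x A z : (z \in rmul A x) = (z * x^-1 \in A).
Proof.
apply/imfsetP/idP => [[a aA ->] | zA]; first by rewrite mulgK.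
by exists (z * x^-1); rewrite ?mulgVK.
Qed.

Lemma mem_setinv A z : (z \in setinv A) = (z^-1 \in A).
Proof.
apply/imfsetP/idP => [[a aA ->] | zA]; first by rewrite invgK.
by exists z^-1; rewrite ?invgK.
Qed.

Lemma setinv_eq0 A : (setinv A == fset0) = (A == fset0).
Proof.
apply/fset0Pn/fset0Pn => -[z]; rewrite ?mem_setinv => zA; last first.
  by exists z^-1; rewrite mem_setinv invgK.
by exists z^-1.
Qed.

Lemma card_lmul x A : #|` lmul x A| = #|` A|.
Proof. by rewrite card_imfset //; apply: mulgI. Qed.

Lemma card_rmul x A : #|` rmul A x| = #|` A|.
Proof. by rewrite card_imfset //; apply: mulIg. Qed.

Lemma card_setmul_lP B A : B != fset0 ->
  #|` setmul B A| = #|` A| <-> {in B &, forall x y, lmul x A = lmul y A}.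
Proof.
move=> B0; apply: card_cover_eqP => // [x xB | z | x _]; last exact: card_lmul.
  by apply/fsubsetP=> _ /imfsetP[a aA ->]; apply/imfset2P; exists x => //; exists a.
by case/imfset2P=> x xB [a aA ->]; exists x => //; apply/imfsetP; exists a.
Qed.

Lemma card_setmul_rP B A : B != fset0 ->
  #|` setmul A B| = #|` A| <-> {in B &, forall x y, rmul A x = rmul A y}.
Proof.
move=> B0; apply: card_cover_eqP => // [x xB | z | x _]; last exact: card_rmul.
  by apply/fsubsetP=> _ /imfsetP[a aA ->]; apply/imfset2P; exists a => //; exists x.
by case/imfset2P=> a aA [x xB ->]; exists x => //; apply/imfsetP; exists a.
Qed.

Lemma VCl0_cardP B A : B != fset0 -> VCl B A 0 <-> #|` setmul B A| = #|` A|.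
Proof. by move=> B0; apply: iff_trans (VCl0P A B0) (iff_sym (card_setmul_lP A B0)). Qed.

Lemma VCr0_cardP B A : B != fset0 -> VCr B A 0 <-> #|` setmul A B| = #|` A|.
Proof. by move=> B0; apply: iff_trans (VCr0P A B0) (iff_sym (card_setmul_rP A B0)). Qed.

End Translates.

Section Cosets.
Variable G : groupType.
Implicit Types (A : {fset G}) (H : G -> Prop) (a b c x y z : G).

Definition heap_closed A := {in A & &, forall a b c, a * b^-1 * c \in A}.

Lemma lmul_setinv_eqP A :
  {in setinv A &, forall x y, lmul x A = lmul y A} <-> heap_closed A.
Proof.
split=> [lmul_eq a b c aA bA cA | closedA].
  have := lmul_eq b^-1 a^-1; rewrite !mem_setinv !invgK => /(_ bA aA) eq_ba.
  have : b^-1 * c \in lmul b^-1 A by rewrite mem_lmul invgK mulVKg.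
  by rewrite eq_ba mem_lmul invgK mulgA.
apply: fsubset_in_eq => x y; rewrite !mem_setinv => xA yA.
apply/fsubsetP=> z; rewrite !mem_lmul => xzA.
by have := closedA _ _ _ yA xA xzA; rewrite invgK mulgA mulgK.
Qed.

Lemma rmul_setinv_eqP A :
  {in setinv A &, forall x y, rmul A x = rmul A y} <-> heap_closed A.
Proof.
split=> [rmul_eq a b c aA bA cA | closedA].
  have := rmul_eq b^-1 c^-1; rewrite !mem_setinv !invgK => /(_ bA cA) eq_bc.
  have : a * b^-1 \in rmul A b^-1 by rewrite mem_rmul invgK mulgVK.
  by rewrite eq_bc mem_rmul invgK.
apply: fsubset_in_eq => x y; rewrite !mem_setinv => xA yA.
apply/fsubsetP=> z; rewrite !mem_rmul => zxA.
by have := closedA _ _ _ zxA xA yA; rewrite invgK mulgVK.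
Qed.

Lemma mem_lcoset A a H : is_lcoset A a H -> forall x, x \in A <-> H (a^-1 * x).
Proof.
move=> Aeq x; rewrite Aeq; split=> [[h Hh ->] | Hx]; first by rewrite mulKg.
by exists (a^-1 * x); rewrite ?mulVKg.
Qed.

Lemma heap_closed_lcoset A a : a \in A -> heap_closed A ->
  is_subgroup (fun h => a * h \in A) /\ is_lcoset A a (fun h => a * h \in A).
Proof.
move=> aA closedA; split; last first.
  by move=> x; split=> [xA | [h ? ->] //]; exists (a^-1 * x); rewrite ?mulVKg.
split; first by rewrite mulg1.
split=> [x y xA yA | x xA].
  by have := closedA _ _ _ xA aA yA; rewrite !mulgA mulgVK.
by have := closedA _ _ _ aA xA aA; rewrite invgM !mulgA mulgVK.
Qed.

Lemma lcoset_heap_closed A a H : is_subgroup H -> is_lcoset A a H -> heap_closed A.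
Proof.
move=> [_ [H_mul H_inv]] Aeq x y z; have memA := mem_lcoset Aeq.
move=> /memA Hx /memA Hy /memA Hz; apply/memA.
have -> : a^-1 * (x * y^-1 * z) = a^-1 * x * (a^-1 * y)^-1 * (a^-1 * z).
  by rewrite invgM invgK !mulgA mulgK.
by apply: (H_mul) => //; apply: (H_mul) => //; apply: H_inv.
Qed.

Lemma heap_closedP A : A != fset0 ->
  heap_closed A <-> exists H a, is_subgroup H /\ is_lcoset A a H.
Proof.
move=> /fset0Pn[a aA]; split=> [closedA | [H [b [subH Aeq]]]].
  by exists (fun h => a * h \in A), a; apply: heap_closed_lcoset.
exact: lcoset_heap_closed subH Aeq.
Qed.

Lemma lmul_eq_closed A : {in A &, forall x y, lmul x A = lmul y A} ->
  {in A & &, forall x y c, y^-1 * (x * c) \in A}.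
Proof.
move=> lmul_eq x y c xA yA cA.
by rewrite -mem_lmul -(lmul_eq x) // mem_lmul mulKg.
Qed.

Lemma rmul_eq_closed A : {in A &, forall x y, rmul A x = rmul A y} ->
  {in A & &, forall x y c, c * x * y^-1 \in A}.
Proof.
move=> rmul_eq x y c xA yA cA.
by rewrite -mem_rmul -(rmul_eq x) // mem_rmul mulgK.
Qed.

Lemma translates_eq_heap_closed A :
  {in A &, forall x y, lmul x A = lmul y A} ->
  {in A &, forall x y, rmul A x = rmul A y} -> heap_closed A.
Proof.
move=> /lmul_eq_closed lclosed /rmul_eq_closed rclosed a b c aA bA cA.
have := rclosed _ _ _ (lclosed _ _ _ cA bA bA) bA aA.
by rewrite !mulgA mulgK.
Qed.

Lemma translates_eq_normal_lcoset A : A != fset0 ->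
  {in A &, forall x y, lmul x A = lmul y A} ->
  {in A &, forall x y, rmul A x = rmul A y} ->
  exists H a, [/\ is_subgroup H, is_lcoset A a H & lcoset_eq_rcoset a H].
Proof.
move=> /fset0Pn[a aA] lmul_eq rmul_eq; exists (fun h => a * h \in A), a.
have [subH Aeq] := heap_closed_lcoset aA (translates_eq_heap_closed lmul_eq rmul_eq).
split=> // x; split=> -[h Hh ->].
  exists (a * h * a^-1); last by rewrite mulgVK.
  by have := rmul_eq_closed rmul_eq Hh aA aA; rewrite !mulgA.
exists (a^-1 * h * a); last by rewrite !mulgA mulgV mul1g.
by have := lmul_eq_closed lmul_eq Hh aA aA; rewrite !mulgA mulVg mulgV !mul1g.
Qed.

Lemma lcoset_eq_rcoset_conj a H : lcoset_eq_rcoset a H ->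
  forall h, H h -> H (a^-1 * h * a).
Proof.
move=> aH_Ha h Hh; have [h' Hh' eq_ha] : exists2 h', H h' & h * a = a * h'.
  by apply/aH_Ha; exists h.
by rewrite -mulgA eq_ha mulKg.
Qed.

Lemma normal_lcoset_lmul_eq A a H :
  is_subgroup H -> is_lcoset A a H -> lcoset_eq_rcoset a H ->
  {in A &, forall x y, lmul x A = lmul y A}.
Proof.
move=> [_ [H_mul H_inv]] Aeq /lcoset_eq_rcoset_conj H_conj.
have memA := mem_lcoset Aeq.
apply: fsubset_in_eq => x y /memA Hx /memA Hy; apply/fsubsetP=> z.
rewrite !mem_lmul => /memA Hxz; apply/memA.
have -> : a^-1 * (y^-1 * z) =
    a^-1 * ((a^-1 * y)^-1 * (a^-1 * x)) * a * (a^-1 * (x^-1 * z)).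
  by rewrite !invgM invgK !mulgA !mulgK.
by apply: (H_mul) => //; apply: H_conj; apply: (H_mul) => //; apply: H_inv.
Qed.

End Cosets.

Theorem proposition2p19 (G : groupType) (A : {fset G}) (hA : A != fset0) :
  (* (a) *)
  (forall B : {fset G}, B != fset0 ->
     (VCl B A 0 <-> #|` setmul B A| = #|` A|) /\
     (VCr B A 0 <-> #|` setmul A B| = #|` A|)) /\
  (* (b) *)
  ((VCl (setinv A) A 0 <-> VCr (setinv A) A 0) /\
   (VCl (setinv A) A 0 <-> #|` setmul A (setinv A)| = #|` A|) /\
   (VCl (setinv A) A 0 <-> #|` setmul (setinv A) A| = #|` A|) /\
   (VCl (setinv A) A 0 <->
      exists (H : G -> Prop) (a : G), is_subgroup H /\ is_lcoset A a H)) /\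
  (* (c) *)
  ((VCl A A 0 <-> VCr A A 0) /\
   (VCl A A 0 <-> #|` setmul A A| = #|` A|) /\
   (VCl A A 0 <->
      exists (H : G -> Prop) (a : G),
        [/\ is_subgroup H, is_lcoset A a H & lcoset_eq_rcoset a H])).
Proof.
split; first by move=> B B0; split; [apply: VCl0_cardP | apply: VCr0_cardP].
have Ainv0 : setinv A != fset0 by rewrite setinv_eq0.
split.
  have VCl_heap := iff_trans (VCl0P A Ainv0) (lmul_setinv_eqP A).
  have VCr_heap := iff_trans (VCr0P A Ainv0) (rmul_setinv_eqP A).
  have card_AAinv := iff_trans (card_setmul_rP A Ainv0) (rmul_setinv_eqP A).
  have card_AinvA := iff_trans (card_setmul_lP A Ainv0) (lmul_setinv_eqP A).
  split; first exact: iff_trans VCl_heap (iff_sym VCr_heap).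
  split; first exact: iff_trans VCl_heap (iff_sym card_AAinv).
  split; first exact: iff_trans VCl_heap (iff_sym card_AinvA).
  exact: iff_trans VCl_heap (heap_closedP hA).
split; first exact: iff_trans (VCl0_cardP A hA) (iff_sym (VCr0_cardP A hA)).
split; first exact: VCl0_cardP.
split=> [/(VCl0_cardP A hA) cardAA | [H [a [subH Aeq aH_Ha]]]].
  by apply: translates_eq_normal_lcoset;
    [ | apply/card_setmul_lP | apply/card_setmul_rP].
by apply/(VCl0P A hA); apply: normal_lcoset_lmul_eq subH Aeq aH_Ha.
Qed.
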